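(* Let $n\ge2$, $N\in\mathbb{Z}$, and let $P$ be an $N$-representative of type $\beta$ of some $[P]\in\mathcal{S}_{3,n}^\beta$. Then for all $i>N$ the quadrilateral with vertices $P_i,P_{i+1},P_{i+2},P_{i+3}$ (in this cyclic order) is convex; more precisely, all of the triples $(P_i,P_{i+1},P_{i+2})$, $(P_{i+1},P_{i+2},P_{i+3})$, $(P_i,P_{i+1},P_{i+3})$, $(P_i,P_{i+2},P_{i+3})$ are positive.
   Context: The affine patch $\mathbb{A}^2=\{[x:y:1]\}\subset\mathbb{RP}^2$ is identified with $\mathbb{R}^2$. For $V_1,V_2,V_3\in\mathbb{A}^2$ with affine coordinates $\tilde V_j=(x_j,y_j,1)$, $\mathcal{O}(V_1,V_2,V_3)=\det(\tilde V_1,\tilde V_2,\tilde V_3)$; the triple is positive if $\mathcal{O}>0$. $\operatorname{int}(V_1,V_2,V_3)$ is the interior of the affine triangle. A twisted $n$-gon is a map $P:\mathbb{Z}\to\mathbb{RP}^2$ with every three consecutive points non-collinear and $P_{i+n}=M(P_i)$ for a fixed $M\in\mathrm{PGL}_3(\mathbb{R})$; $\mathcal{P}_n$ is the set of classes modulo projective equivalence. $P$ is $k$-nice if $P_i,P_{i+1},P_{i+k},P_{i+k+1}$ are in general position for every $i$. For $k\ge3$, $[P]\in\mathcal{P}_n$ is a $k$-spiral of type $\beta$ if it is $k$-nice and for every $N\in\mathbb{Z}$ some representative $P$ (an $N$-representative of type $\beta$) satisfies, for all $i\ge N$: $P_i\in\mathbb{A}^2$, $(P_i,P_{i+1},P_{i+2})$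 positive, $(P_i,P_{i+1},P_{i+k})$ positive and $P_{i+k+1}\in\operatorname{int}(P_i,P_{i+1},P_{i+k})$. $\mathcal{S}_{k,n}^\beta$ is the set of such classes. *)

(* Points of RP^2 are represented by nonzero row vectors of R^3
   (homogeneous coordinates); all notions below are invariant under rescaling. *)
From HB Require Import structures.
From mathcomp Require Import all_boot all_order all_algebra.
From mathcomp Require Import reals.
Set Implicit Arguments. Unset Strict Implicit. Unset Printing Implicit Defensive.
Import Order.TTheory GRing.Theory Num.Theory.
Local Open Scope ring_scope.

Section Defs.
Variable R : realType.

Definition pt := 'rV[R]_3.

Definition det3 (a b c : pt) : R :=
  \det (\matrix_(i < 3, j < 3) ([:: a; b; c]`_i) 0 j).

Definition proj_eq (v w : pt) : Prop := exists2 l : R, l != 0 & v = l *: w.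

Definition in_A2 (v : pt) : bool := v 0 2%:R != 0.

Definition aff (v : pt) : pt := (v 0 2%:R)^-1 *: v.

Definition orient (a b c : pt) : R := det3 (aff a) (aff b) (aff c).

Definition positive (a b c : pt) : Prop := 0 < orient a b c.

Definition in_int (a b c x : pt) : Prop :=
  exists t1 t2 t3 : R, [/\ 0 < t1, 0 < t2, 0 < t3, t1 + t2 + t3 = 1 &
    aff x = t1 *: aff a + t2 *: aff b + t3 *: aff c].

Definition noncollinear (a b c : pt) : Prop := det3 a b c != 0.

Definition twisted_ngon (n : nat) (P : int -> pt) : Prop :=
  [/\ forall i, P i != 0,
      forall i, noncollinear (P i) (P (i + 1)) (P (i + 2)) &
      exists2 M : 'M[R]_3, M \in unitmx &
        forall i, proj_eq (P (i + n%:Z)) (P i *m M)].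

Definition proj_equiv (P Q : int -> pt) : Prop :=
  exists2 A : 'M[R]_3, A \in unitmx & forall i, proj_eq (Q i) (P i *m A).

Definition general_position4 (a b c d : pt) : Prop :=
  [/\ noncollinear a b c, noncollinear a b d, noncollinear a c d &
      noncollinear b c d].

Definition k_nice (k : nat) (P : int -> pt) : Prop :=
  forall i, general_position4 (P i) (P (i + 1)) (P (i + k%:Z)) (P (i + k%:Z + 1)).

Definition N_rep_beta (k : nat) (N : int) (P : int -> pt) : Prop :=
  forall i, N <= i ->
    [/\ in_A2 (P i),
        positive (P i) (P (i + 1)) (P (i + 2)),
        positive (P i) (P (i + 1)) (P (i + k%:Z)) &
        in_int (P i) (P (i + 1)) (P (i + k%:Z)) (P (i + k%:Z + 1))].

Definition spiral_beta (k n : nat) (P0 : int -> pt) : Prop :=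
  [/\ (3 <= k)%N, twisted_ngon n P0, k_nice k P0 &
      forall N : int, exists2 Q, twisted_ngon n Q /\ proj_equiv P0 Q &
                                 N_rep_beta k N Q].
End Defs.

(* The first three triangles are positive directly by the type-beta conditions
   at the indices i and i + 1.  For the last one, apply those conditions at
   i - 1 (which is why i > N is needed): P_{i+3} lies inside the positive
   triangle (P_{i-1}, P_i, P_{i+2}), and writing it as t1 P_{i-1} + t2 P_i +
   t3 P_{i+2} in affine coordinates gives
   O(P_i, P_{i+2}, P_{i+3}) = t1 O(P_{i-1}, P_i, P_{i+2}) > 0. *)

From HB Require Import structures.
From mathcomp Require Import all_boot all_order all_algebra.
From mathcomp Require Import reals ring zify.
Import Order.TTheory GRing.Theory Num.Theory.
Local Open Scope ring_scope.

Section Orientation.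
Variable R : realType.
Implicit Types a b c x : pt R.

(* Entries addressed by a natural index: after Laplace expansion the column
   indices are nested [lift]s, which [inord] normalizes by computation. *)
Local Definition entry (v : pt R) (k : nat) := v 0 (inord k).

Local Lemma entryE (v : pt R) (j : 'I_3) : v 0 j = entry v j.
Proof. by rewrite /entry inord_val. Qed.

Lemma det3E a b c : det3 a b c =
    a 0 0 * (b 0 1 * c 0 2%:R - b 0 2%:R * c 0 1)
  - a 0 1 * (b 0 0 * c 0 2%:R - b 0 2%:R * c 0 0)
  + a 0 2%:R * (b 0 0 * c 0 1 - b 0 1 * c 0 0).
Proof.
rewrite /det3 (expand_det_row _ ord0) !big_ord_recl big_ord0 /cofactor.
rewrite !(expand_det_row _ ord0) !big_ord_recl big_ord0 /cofactor.
rewrite !det_mx11 !big_ord0 !mxE /= !entryE /= /bump /= ?addn0 ?add0n.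
have -> : ((1 %% 3 + 1 %% 3) %% 3 = 1 + 1)%N by [].
by rewrite !expr0 !expr1; ring.
Qed.

Lemma det3_lin_comb a b c (t1 t2 t3 : R) :
  det3 b c (t1 *: a + t2 *: b + t3 *: c) = t1 * det3 a b c.
Proof. by rewrite !det3E !mxE; ring. Qed.

Lemma in_int_positive a b c x :
  in_int a b c x -> positive a b c -> positive b c x.
Proof.
case=> t1 [t2 [t3 [t1_gt0 _ _ _ x_comb]]] abc_pos.
by rewrite /positive /orient x_comb det3_lin_comb mulr_gt0.
Qed.

End Orientation.

Theorem mainTheorem13 (R : realType) (n : nat) (N : int)
    (P0 P : int -> pt R) :
  (2 <= n)%N ->
  spiral_beta 3 n P0 ->
  twisted_ngon n P -> proj_equiv P0 P ->
  N_rep_beta 3 N P ->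
  forall i : int, N < i ->
    [/\ positive (P i) (P (i + 1)) (P (i + 2)),
        positive (P (i + 1)) (P (i + 2)) (P (i + 3)),
        positive (P i) (P (i + 1)) (P (i + 3)) &
        positive (P i) (P (i + 2)) (P (i + 3))].
Proof.
move=> _ _ _ _ Prep i Ni.
have [_ pos_i012 pos_i013 _] := Prep i (ltW Ni).
have [_ pos_i123 _ _] := Prep (i + 1) ltac:(lia).
have [_ _ pos_prev in_prev] := Prep (i - 1) ltac:(lia).
move: pos_i123 pos_prev in_prev.
have -> : i + 1 + 1 = i + 2 by lia.
have -> : i + 1 + 2 = i + 3 by lia.
have -> : i - 1 + 1 = i by lia.
have -> : i - 1 + 3%:Z + 1 = i + 3 by lia.
have -> : i - 1 + 3%:Z = i + 2 by lia.
move=> pos_i123 pos_prev in_prev.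
split=> //; exact: in_int_positive in_prev pos_prev.
Qed.
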